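(* Let $[X,A]$ be a Banach space with an $i$-operator. Then $A\oplus(-A)$, $(x_1,x_2)\mapsto(Ax_1,-Ax_2)$, is an $i$-operator on $X\oplus X$ (normed e.g. by $\|(x_1,x_2)\|=\|x_1\|+\|x_2\|$), and in the category of Banach spaces with an $i$-operator $[X\oplus X,A\oplus -A]\simeq[X\oplus X,N_X]$.
   Context: A Banach space with an $i$-operator is a pair $[X,A]$ with $X$ a real Banach space and $A:X\to X$ bounded linear with $A^2=-I_X$ and $\|\alpha x+\beta Ax\|=\|x\|$ for all real $\alpha,\beta$ with $\alpha^2+\beta^2=1$. Two such spaces $[X,A]$, $[Y,B]$ are isomorphic ($\simeq$) if there is a bounded linear bijection $T:X\to Y$ with $TA=BT$. $N_X(x_1,x_2)=(-x_2,x_1)$, and $[X\oplus X,N_X]$ is the complexification of $X$, with norm $\|(x_1,x_2)\|=\left(\frac1{2\pi}\int_{-\pi}^{\pi}\|x_1\cos\phi+x_2\sin\phi\|^2d\phi\right)^{1/2}$. *)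

From HB Require Import structures.
From mathcomp Require Import all_boot all_order all_algebra.
From mathcomp Require Import all_classical all_reals all_analysis.
Set Implicit Arguments. Unset Strict Implicit. Unset Printing Implicit Defensive.
Import Order.TTheory GRing.Theory Num.Theory.
Import numFieldNormedType.Exports.
Local Open Scope ring_scope.
Local Open Scope classical_set_scope.

Section Defs.
Variable R : realType.

Definition is_linear (V W : lmodType R) (f : V -> W) : Prop :=
  forall (a : R) (u v : V), f (a *: u + v) = a *: f u + f v.

Definition is_bounded (V W : Type) (nV : V -> R) (nW : W -> R) (f : V -> W) :=
  exists M : R, forall x, nW (f x) <= M * nV x.

Definition i_operator (V : lmodType R) (nrm : V -> R) (A : V -> V) : Prop :=
  [/\ is_linear A, is_bounded nrm nrm A, (forall x, A (A x) = - x)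
    & forall (a b : R) (x : V), a ^+ 2 + b ^+ 2 = 1 ->
        nrm (a *: x + b *: A x) = nrm x].

Definition sum_norm (X : normedModType R) (y : X * X) : R := `|y.1| + `|y.2|.

Definition cplx_norm (X : normedModType R) (y : X * X) : R :=
  Num.sqrt ((2 * pi)^-1 *
    Rintegral (@lebesgue_measure R) `[- pi, pi]%classic
      (fun phi : R => `|cos phi *: y.1 + sin phi *: y.2| ^+ 2)).

Definition dsum_opp (X : lmodType R) (A : X -> X) (y : X * X) : X * X :=
  (A y.1, - A y.2).

Definition N_op (X : lmodType R) (y : X * X) : X * X := (- y.2, y.1).

End Defs.

(** The intertwiner is T (x1, x2) = (x1 + x2, A x2 - A x1): since A^2 = -1,
    T (A x1, - A x2) = (A x1 - A x2, x1 + x2) = N_X (T (x1, x2)), and T is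
    inverted by (u, v) |-> ((u + A v) / 2, (u - A v) / 2).  T is bounded into
    the complexification norm because that norm is dominated by the sum norm:
    the integrand |x1 cos phi + x2 sin phi|^2 never exceeds (|x1| + |x2|)^2. *)
From HB Require Import structures.
From mathcomp Require Import all_boot all_order all_algebra.
From mathcomp Require Import all_classical all_reals all_analysis.
From mathcomp Require Import lra.
Set Implicit Arguments. Unset Strict Implicit. Unset Printing Implicit Defensive.
Import Order.TTheory GRing.Theory Num.Theory.
Import numFieldNormedType.Exports.
Local Open Scope ring_scope.

Section IsLinear.
Variables (R : realType) (V W : lmodType R) (f : V -> W).
Hypothesis linf : is_linear f.

Lemma is_linear0 : f 0 = 0.
Proof.
have := linf 1 0 0; rewrite !scale1r addr0 => f0.
by apply: (@addrI _ (f 0)); rewrite addr0 -f0.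
Qed.

Lemma is_linearD u v : f (u + v) = f u + f v.
Proof. by have := linf 1 u v; rewrite !scale1r. Qed.

Lemma is_linearZ a u : f (a *: u) = a *: f u.
Proof. by have := linf a u 0; rewrite !addr0 is_linear0 addr0. Qed.

Lemma is_linearN u : f (- u) = - f u.
Proof. by rewrite -scaleN1r is_linearZ scaleN1r. Qed.

End IsLinear.

Lemma scaler_half (R : realType) (V : lmodType R) (x : V) :
  2^-1 *: (x + x) = x.
Proof.
by rewrite -mulr2n -(scaler_nat 2 x) scalerA mulVf ?scale1r // pnatr_eq0.
Qed.

Lemma i_operator_dsum_opp (R : realType) (X : normedModType R) (A : X -> X) :
  i_operator (fun x : X => `|x|) A -> i_operator (@sum_norm R X) (dsum_opp A).
Proof.
case=> linA [M boundA] AA isoA; split.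
- move=> a [u1 u2] [v1 v2]; rewrite /dsum_opp /=.
  by rewrite !linA opprD -scalerN.
- exists M => -[y1 y2]; rewrite /sum_norm /dsum_opp /= normrN mulrDr.
  exact: lerD.
- by move=> [y1 y2]; rewrite /dsum_opp /= (is_linearN linA) !AA opprK.
- move=> a b [y1 y2] ab1; rewrite /sum_norm /dsum_opp /=.
  by rewrite isoA // scalerN -scaleNr isoA // sqrrN.
Qed.

Lemma Rintegral_itv_le_cst (R : realType) (a b c : R) (f : R -> R) :
  a <= b -> continuous f -> (forall x, a <= x <= b -> f x <= c) ->
  Rintegral (@lebesgue_measure R) `[a, b]%classic f <= c * (b - a).
Proof.
move=> ab cf fc.
have integrable (g : R -> R) : continuous g ->
    lebesgue_measure.-integrable `[a, b]%classic (EFin \o g).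
  move=> cg; apply: continuous_compact_integrable; first exact: segment_compact.
  exact: continuous_subspaceT.
apply: (le_trans (le_Rintegral _ (integrable _ cf)
                   (integrable _ (@cst_continuous _ _ c)) _)) => //.
rewrite Rintegral_cst // (_ : fine _ = b - a) //.
have := @lebesgue_measure_itv R `[a, b]; rewrite /= lte_fin => ->.
case: (ltP a b) => [//|ba]; suff -> : b = a by rewrite subrr.
by apply/eqP; rewrite eq_le ab ba.
Qed.

Section ComplexificationNorm.
Variables (R : realType) (X : normedModType R).

Lemma continuous_sqr_norm_cos_sin (u v : X) :
  continuous (fun phi : R => `|cos phi *: u + sin phi *: v| ^+ 2).
Proof.
move=> phi.
apply: (@continuous_comp _ _ _ (fun phi : R => `|cos phi *: u + sin phi *: v|)
                              (fun r : R => r ^+ 2)); last exact: exprn_continuous.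
apply: cvg_norm; apply: cvgD; apply: cvgZ;
  by [exact: continuous_cos | exact: continuous_sin | exact: cvg_cst].
Qed.

Lemma norm_cos_sin_le (u v : X) (phi : R) :
  `|cos phi *: u + sin phi *: v| <= `|u| + `|v|.
Proof.
rewrite (le_trans (ler_normD _ _)) // !normrZ.
by apply: lerD; rewrite -[leRHS]mul1r ler_wpM2r // ?cos_max ?sin_max.
Qed.

Lemma cplx_norm_le_sum_norm (y : X * X) : cplx_norm y <= sum_norm y.
Proof.
rewrite /cplx_norm /sum_norm; set C := `|y.1| + `|y.2|.
have C0 : 0 <= C by rewrite addr_ge0.
have pi0 : 0 < pi :> R := pi_gt0 R.
have int_le : Rintegral lebesgue_measure `[- pi, pi]%classic
    (fun phi => `|cos phi *: y.1 + sin phi *: y.2| ^+ 2) <= C ^+ 2 * (2 * pi).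
  rewrite (_ : 2 * pi = pi - - pi); last by lra.
  apply: Rintegral_itv_le_cst; first by lra.
    exact: continuous_sqr_norm_cos_sin.
  by move=> phi _; rewrite ler_pXn2r ?nnegrE ?norm_cos_sin_le.
rewrite -[leRHS]ger0_norm // -sqrtr_sqr ler_sqrt ?sqr_ge0 //.
by rewrite -ler_pdivlMl ?invr_gt0 ?mulr_gt0 // invrK mulrC.
Qed.

Lemma is_bounded_cplx_norm (f : X * X -> X * X) :
  is_bounded (@sum_norm R X) (@sum_norm R X) f ->
  is_bounded (@sum_norm R X) (@cplx_norm R X) f.
Proof.
by case=> M bound_f; exists M => y; apply: le_trans (cplx_norm_le_sum_norm _) _.
Qed.

End ComplexificationNorm.

Section Intertwiner.
Variables (R : realType) (X : normedModType R) (A : X -> X).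
Hypotheses (linA : is_linear A) (AA : forall x, A (A x) = - x).

Definition intertwiner (y : X * X) : X * X := (y.1 + y.2, - A y.1 + A y.2).

Definition intertwiner_inv (y : X * X) : X * X :=
  (2^-1 *: (y.1 + A y.2), 2^-1 *: (y.1 - A y.2)).

Lemma is_linear_intertwiner : is_linear intertwiner.
Proof.
move=> a [u1 u2] [v1 v2]; rewrite /intertwiner /= !linA.
by congr (_, _) => /=; rewrite ?opprD scalerDr ?scalerN addrACA.
Qed.

Lemma is_bounded_intertwiner :
  is_bounded (fun x : X => `|x|) (fun x : X => `|x|) A ->
  is_bounded (@sum_norm R X) (@sum_norm R X) intertwiner.
Proof.
case=> M boundA; exists (1 + M) => -[y1 y2]; rewrite /sum_norm /intertwiner /=.
have := ler_normD y1 y2; have := ler_normD (- A y1) (A y2).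
have := boundA y1; have := boundA y2; rewrite normrN; lra.
Qed.

Lemma intertwinerK : cancel intertwiner intertwiner_inv.
Proof.
move=> [y1 y2]; rewrite /intertwiner /intertwiner_inv /=.
rewrite (is_linearD linA) (is_linearN linA) !AA opprK.
congr (_, _); rewrite -[RHS]scaler_half; congr (_ *: _).
  by rewrite addrACA subrr addr0.
by rewrite opprB addrC addrA addrNK.
Qed.

Lemma intertwiner_invK : cancel intertwiner_inv intertwiner.
Proof.
move=> [u v]; rewrite /intertwiner /intertwiner_inv /=.
rewrite -scalerDr addrACA subrr addr0 scaler_half.
rewrite !(is_linearZ linA) !(is_linearD linA) (is_linearN linA) AA.
rewrite -scalerN -scalerDr; congr (_, _); rewrite -[RHS]scaler_half.
by congr (_ *: _); rewrite opprK opprB addrA addrNK.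
Qed.

Lemma intertwiner_dsum_opp y : intertwiner (dsum_opp A y) = N_op (intertwiner y).
Proof.
case: y => y1 y2; rewrite /intertwiner /dsum_opp /N_op /=.
by rewrite (is_linearN linA) !AA !opprK opprD opprK.
Qed.

End Intertwiner.

Theorem proposition3 (R : realType) (X : completeNormedModType R) (A : X -> X) :
  i_operator (fun x : X => `|x|) A ->
  i_operator (@sum_norm R X) (@dsum_opp R X A) /\
  exists T : X * X -> X * X,
    [/\ is_linear T, is_bounded (@sum_norm R X) (@cplx_norm R X) T,
        bijective T
      & forall y, T (dsum_opp A y) = N_op (T y) ].
Proof.
move=> iA; split; first exact: i_operator_dsum_opp.
case: iA => linA boundA AA _.
exists (intertwiner A); split.
- exact: is_linear_intertwiner.
- exact/is_bounded_cplx_norm/is_bounded_intertwiner.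
- exists (intertwiner_inv A); [exact: intertwinerK | exact: intertwiner_invK].
- exact: intertwiner_dsum_opp.
Qed.
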